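(* Let $\mathcal G=(V,E)$ be a connected DAG with $|V|\ge 3$ which has at least one subset $W\subseteq V$ of three vertices whose vertex-induced subgraph is connected, has a skeleton that is not the complete graph on three vertices, and is not a v-structure (i.e. not of the form $x\to z\leftarrow y$). Let $\mathcal A,\mathcal B$ be finite sets and $f:\mathcal A\to\mathcal B$ a surjection with $|\mathcal A|>|\mathcal B|>1$. Then $\hat f(\mathrm{im}(\mathcal G,\mathcal A))\not\subseteq \mathrm{im}(\mathcal G,\mathcal B)$; that is, there is a distribution on $\mathcal A^V$ factorising over $\mathcal G$ whose image under coordinatewise application of $f$ does not factorise over $\mathcal G$.
   Context: For a finite DAG $\mathcal G=(V,E)$ and a finite set $\mathcal C$, $\mathrm{im}(\mathcal G,\mathcal C)$ is the set of all probability distributions on $\mathcal C^V$ that factorise over $\mathcal G$, i.e. of the form $p(x)=\prod_{v\in V}q_v(x_v\mid x_{pa(v)})$ for conditional distributions $q_v$, where $pa(v)$ is the set of parents of $v$. For $f:\mathcal A\to\mathcal B$, $\hat f$ maps a distribution on $\mathcal A^V$ to its pushforward (image measure) on $\mathcal B^V$ under the coordinatewise map $(x_v)_v\mapsto(f(x_v))_v$. The vertex-induced subgraph on $W$ has vertex set $W$ and all edges of $E$ with both endpoints in $W$; its skeleton is the underlying undirected graph. *)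

From HB Require Import structures.
From mathcomp Require Import all_boot all_order all_algebra.
From mathcomp Require Import reals.
Set Implicit Arguments. Unset Strict Implicit. Unset Printing Implicit Defensive.
Import Order.TTheory GRing.Theory Num.Theory.
Local Open Scope ring_scope.

(* A directed graph on a finite vertex type V is given by its edge relation E:
   E u v means u -> v. *)

Definition acyclic (V : finType) (E : rel V) : Prop :=
  forall u v : V, E u v -> ~~ connect E v u.

Definition adj (V : finType) (E : rel V) : rel V := fun u v => E u v || E v u.

Definition dag_connected (V : finType) (E : rel V) : Prop :=
  forall u v : V, connect (adj E) u v.

Definition adjW (V : finType) (E : rel V) (W : {set V}) : rel V :=
  fun u v => [&& u \in W, v \in W & adj E u v].

Definition induced_connected (V : finType) (E : rel V) (W : {set V}) : Prop :=
  forall u v, u \in W -> v \in W -> connect (adjW E W) u v.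

Definition induced_complete (V : finType) (E : rel V) (W : {set V}) : Prop :=
  forall u v, u \in W -> v \in W -> u != v -> adj E u v.

Definition induced_vstructure (V : finType) (E : rel V) (W : {set V}) : Prop :=
  exists x y z : V, [/\ x != y, x != z, y != z, W = [set x; y; z] &
    forall u v, u \in W -> v \in W -> E u v = ((u == x) || (u == y)) && (v == z)].

Definition pa (V : finType) (E : rel V) (v : V) : {set V} := [set u | E u v].

Definition is_dist (R : realType) (V C : finType) (p : {ffun V -> C} -> R) : Prop :=
  (forall x, 0 <= p x) /\ \sum_x p x = 1.

(* p factorises over G: p(x) = prod_v q_v(x_v | x_pa(v)) with conditional
   distributions q_v; q v c x is q_v(c | x_pa(v)), depending on x only via
   the parent coordinates. *)
Definition factorises (R : realType) (V C : finType) (E : rel V)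
  (p : {ffun V -> C} -> R) : Prop :=
  exists q : V -> C -> {ffun V -> C} -> R,
    [/\ (forall v c (x y : {ffun V -> C}), (forall u, u \in pa E v -> x u = y u) -> q v c x = q v c y),
        (forall v c x, 0 <= q v c x),
        (forall v x, \sum_c q v c x = 1) &
        (forall x, p x = \prod_v q v (x v) x)].

Definition im (R : realType) (V C : finType) (E : rel V) (p : {ffun V -> C} -> R) : Prop :=
  is_dist p /\ factorises E p.

Definition fmapV (V A B : finType) (f : A -> B) (x : {ffun V -> A}) : {ffun V -> B} :=
  [ffun v => f (x v)].

Definition pushforward (R : realType) (V A B : finType) (f : A -> B)
  (p : {ffun V -> A} -> R) : {ffun V -> B} -> R :=
  fun y => \sum_(x | fmapV f x == y) p x.

From HB Require Import structures.
From mathcomp Require Import all_boot all_order all_algebra.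
From mathcomp Require Import reals.
From mathcomp Require Import lra.
Set Implicit Arguments. Unset Strict Implicit. Unset Printing Implicit Defensive.
Import Order.TTheory GRing.Theory Num.Theory.
Local Open Scope ring_scope.

(* Choose vertices [u], [m], [w] with [m -> w], [u] adjacent to [m] and [u], [w]
   non-adjacent: they form a path [u -> m -> w] or a fork [u <- m -> w].  Take
   [a0 != a1] with [f a0 = f a1] and [a2] with [f a2 != f a0], and let [p] be the
   uniform mixture of the constant configuration [a0] and the configuration that is
   [a2] at [u] and [w], [a1] at [m] and [a0] elsewhere.  Along the path (or from the
   root of the fork) each differing coordinate determines the next through an edge,
   so [p] factorises over the DAG.  After applying [f], the coordinate at [m] no
   longer carries information, yet [u] and [w] stay perfectly correlated.  This is
   impossible for a factorising distribution: on a slice where only the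
   non-adjacent [u] and [w] vary, it is dominated by a product of two probability
   vectors, and such a product cannot put mass 1/2 on two diagonal points. *)

Lemma acyclic_irrefl (V : finType) (E : rel V) : acyclic E -> irreflexive E.
Proof. by move=> acyc v; apply/negbTE/negP => /acyc; rewrite connect0. Qed.

Lemma acyclic_asym (V : finType) (E : rel V) u v : acyclic E -> E u v -> ~~ E v u.
Proof. by move=> acyc /acyc; apply: contra => /connect1. Qed.

Lemma card3_third (T : finType) (W : {set T}) x z :
  #|W| = 3 -> x \in W -> z \in W -> x != z ->
  exists y, [/\ y != x, y != z & W = [set x; y; z]].
Proof.
move=> W3 xW zW xz.
have xzW : [set x; z] \subset W by rewrite subUset !sub1set xW zW.
have /cards1P[y Wy] : #|W :\: [set x; z]| == 1 by rewrite cardsDS // W3 cards2 xz.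
have : y \in W :\: [set x; z] by rewrite Wy set11.
rewrite !inE negb_or => /andP[/andP[yx yz] _]; exists y; split => //.
apply/setP => t; have := congr1 (fun S : {set T} => t \in S) Wy.
rewrite !inE; have [-> | tx] := eqVneq t x; first by rewrite xW.
have [-> | tz] := eqVneq t z; first by rewrite zW !orbT.
by rewrite /= orbF => ->.
Qed.

Lemma adjC (V : finType) (E : rel V) : symmetric (adj E).
Proof. by move=> u v; rewrite /adj orbC. Qed.

Lemma induced_connected_neighbour (V : finType) (E : rel V) (W : {set V}) x z :
  induced_connected E W -> x \in W -> z \in W -> x != z ->
  exists2 t, t \in W & adj E x t.
Proof.
move=> conW xW zW; move: (conW x z xW zW) => /connectP[[|t p] /= path_xz ->].
  by rewrite eqxx.
by case/andP: path_xz => /and3P[_ tW xt] _ _; exists t.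
Qed.

Lemma induced_vstructure_collider (V : finType) (E : rel V) x y z :
  acyclic E -> x != y -> x != z -> y != z -> E x z -> E y z -> ~~ adj E x y ->
  induced_vstructure E [set x; y; z].
Proof.
move=> acyc xy xz yz Exz Eyz; rewrite /adj negb_or => /andP[/negbTE Exy /negbTE Eyx].
have irr := acyclic_irrefl acyc.
have /negbTE Ezx := acyclic_asym acyc Exz; have /negbTE Ezy := acyclic_asym acyc Eyz.
have yx : y != x by rewrite eq_sym.
have zx : z != x by rewrite eq_sym.
have zy : z != y by rewrite eq_sym.
exists x, y, z; split => // a b; rewrite !inE.
by move=> /orP[/orP[]|] /eqP-> /orP[/orP[]|] /eqP->;
  rewrite ?irr ?Exz ?Eyz ?Exy ?Eyx ?Ezx ?Ezy ?eqxx ?(negbTE xy) ?(negbTE xz) ?(negbTE yz)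
          ?(negbTE yx) ?(negbTE zx) ?(negbTE zy) ?orbT.
Qed.

Lemma chain_or_fork_triple (V : finType) (E : rel V) :
  acyclic E ->
  (exists W : {set V}, [/\ #|W| = 3%N, induced_connected E W,
     ~ induced_complete E W & ~ induced_vstructure E W]) ->
  exists u m w, [/\ u != w, E m w, adj E u m & ~~ adj E u w].
Proof.
move=> acyc [W [W3 conW ncompW nvsW]].
have irr := acyclic_irrefl acyc.
have [x [z [xW zW xz nadj_xz]]] : exists x z, [/\ x \in W, z \in W, x != z & ~~ adj E x z].
  case: (boolP [exists x in W, exists z in W, (x != z) && ~~ adj E x z]).
    by case/exists_inP=> x xW /exists_inP[z zW /andP[xz nadj]]; exists x, z.
  move=> none; exfalso; apply: ncompW => a b aW bW ab; apply: contraR none => nab.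
  by apply/exists_inP; exists a => //; apply/exists_inP; exists b; rewrite ?ab.
have [y [yx yz W_eq]] := card3_third W3 xW zW xz.
have adj_y s s2 : s \in W -> s2 \in W -> s != s2 -> ~~ adj E s s2 ->
    W = [set s; y; s2] -> adj E s y.
  move=> sW s2W ss2 nadj Weq; have [t tW st] := induced_connected_neighbour conW sW s2W ss2.
  move: tW; rewrite Weq !inE => /orP[/orP[]|] /eqP t_eq; move: st; rewrite t_eq //.
    by rewrite /adj orbb irr.
  by move=> st; rewrite st in nadj.
have xy := adj_y _ _ xW zW xz nadj_xz W_eq.
have zy : adj E z y.
  apply: (adj_y _ _ zW xW); rewrite 1?eq_sym 1?adjC //.
  by apply/setP => t; rewrite W_eq !inE; case: (t == x); case: (t == z); rewrite ?orbT ?orbF.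
have [Eyz | nEyz] := boolP (E y z); first by exists x, y, z.
have Ezy : E z y by move: zy; rewrite /adj (negbTE nEyz) orbF.
have Eyx : E y x.
  move: xy; rewrite /adj; case: (boolP (E x y)) => //= Exy _; exfalso; apply: nvsW.
  by rewrite W_eq setUAC; apply: induced_vstructure_collider; rewrite // eq_sym.
by exists z, y, x; split; rewrite // 1?eq_sym // adjC.
Qed.

Section SumBounds.
Variables (R : realType) (I : finType) (F : I -> R).
Hypothesis F_ge0 : forall i, 0 <= F i.

Lemma ler_term_sum i : F i <= \sum_j F j.
Proof. by rewrite (bigD1 i) //= lerDl sumr_ge0. Qed.

Lemma lerD_terms_sum i j : i != j -> F i + F j <= \sum_k F k.
Proof.
move=> neq_ij; rewrite (bigD1 i) //= (bigD1 j) 1?eq_sym //= addrA lerDl.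
exact: sumr_ge0.
Qed.

End SumBounds.

Lemma sum_indicator (R : realType) (T : finType) (t0 : T) :
  \sum_t (t == t0)%:R = 1 :> R.
Proof. by rewrite (bigD1 t0) //= eqxx big1 ?addr0 // => t /negbTE ->. Qed.

Lemma prod_indicator (R : realType) (T : finType) (P : pred T) (b : T -> bool) :
  \prod_(t | P t) (b t)%:R = [forall t, P t ==> b t]%:R :> R.
Proof.
case: (boolP [forall t, _]) => [/forallP allb | /forallPn[t]].
  by apply: big1 => t /(implyP (allb t)) ->.
by rewrite negb_imply => /andP[Pt /negbTE bF]; rewrite (bigD1 t) //= bF mul0r.
Qed.

Definition mix2 (R : realType) (T : eqType) (z y t : T) : R :=
  ((t == z)%:R + (t == y)%:R) / 2.

Lemma mix2_ge0 (R : realType) (T : eqType) (z y t : T) : 0 <= mix2 R z y t.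
Proof. by rewrite divr_ge0 ?addr_ge0. Qed.

Lemma sum_mix2 (R : realType) (T : finType) (z y : T) : \sum_t mix2 R z y t = 1.
Proof. rewrite -mulr_suml big_split /= !sum_indicator; lra. Qed.

Lemma mix2_left (R : realType) (T : eqType) (z y : T) : z != y -> mix2 R z y z = 1 / 2.
Proof. by move=> /negbTE zy; rewrite /mix2 eqxx zy addr0. Qed.

Lemma mix2_right (R : realType) (T : eqType) (z y : T) : z != y -> mix2 R z y y = 1 / 2.
Proof. by move=> zy; rewrite /mix2 eqxx eq_sym (negbTE zy) add0r. Qed.

Lemma is_dist_mix2 (R : realType) (V C : finType) (z y : {ffun V -> C}) :
  is_dist (mix2 R z y).
Proof. by split; [exact: mix2_ge0 | exact: sum_mix2]. Qed.

Lemma pushforward_mix2 (R : realType) (V A B : finType) (f : A -> B) (z y : {ffun V -> A}) :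
  pushforward f (mix2 R z y) =1 mix2 R (fmapV f z) (fmapV f y).
Proof.
move=> t; rewrite /pushforward /mix2 -mulr_suml big_split /=.
have sum_pt (s : {ffun V -> A}) :
    \sum_(x | fmapV f x == t) ((x == s)%:R : R) = (fmapV f s == t)%:R.
  rewrite big_mkcond (bigD1 s) //= eqxx big1 ?addr0; first by case: ifP.
  by move=> x /negbTE ->; case: ifP.
by rewrite !sum_pt !(eq_sym t).
Qed.

Definition fupd (V C : finType) (x : {ffun V -> C}) (v : V) (c : C) : {ffun V -> C} :=
  [ffun t => if t == v then c else x t].

Lemma fupd_id (V C : finType) (x : {ffun V -> C}) (v : V) (c : C) : x v = c -> fupd x v c = x.
Proof. by move=> <-; apply/ffunP => t; rewrite ffunE; case: eqP => [->|]. Qed.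

Lemma fmapV_fupd (V A B : finType) (f : A -> B) (x : {ffun V -> A}) (v : V) (a : A) :
  fmapV f (fupd x v a) = fupd (fmapV f x) v (f a).
Proof. by apply/ffunP => t; rewrite !ffunE; case: eqP. Qed.

Section MixtureFactorises.
Variables (R : realType) (V C : finType) (E : rel V).
Variables (z y : {ffun V -> C}) (r : V) (par : V -> V).
Hypothesis par_edge : forall v, v != r -> z v != y v -> E (par v) v.
Hypothesis par_diff : forall v, v != r -> z v != y v -> z (par v) != y (par v).
Hypothesis reach_root : forall v, z v != y v -> exists n, iter n par v = r.

Definition forced (x : {ffun V -> C}) (v : V) : C :=
  if x (par v) == z (par v) then z v else y v.

Definition consistent (x : {ffun V -> C}) : bool :=
  [forall v, (v != r) ==> (x v == forced x v)].

Lemma forced_same x v : z v = y v -> forced x v = z v.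
Proof. by rewrite /forced => ->; case: ifP. Qed.

Lemma consistent_z : consistent z.
Proof. by apply/forallP => v; apply/implyP => _; rewrite /forced eqxx. Qed.

Lemma consistent_y : consistent y.
Proof.
apply/forallP => v; apply/implyP => v_r; rewrite /forced.
have [zy_v | /(par_diff v_r)] := eqVneq (z v) (y v); first by rewrite -zy_v; case: ifP.
by rewrite eq_sym => /negbTE ->.
Qed.

Lemma consistent_eq x w : consistent w -> consistent x -> x r = w r -> x = w.
Proof.
move=> /forallP cw /forallP cx xw_r; apply/ffunP => v.
have [-> // | v_r] := eqVneq v r.
have [zy_v | dv] := eqVneq (z v) (y v).
  move/implyP/(_ v_r)/eqP: (cx v) => ->; move/implyP/(_ v_r)/eqP: (cw v) => ->.
  by rewrite !forced_same.
have [n] := reach_root dv; elim: n v v_r dv => [|n IHn] v v_r dv.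
  by move=> /= v_eq; rewrite v_eq eqxx in v_r.
rewrite iterSr => reach.
move/implyP/(_ v_r)/eqP: (cx v) => ->; move/implyP/(_ v_r)/eqP: (cw v) => ->.
rewrite /forced; have [-> | par_r] := eqVneq (par v) r; first by rewrite xw_r.
by rewrite (IHn _ par_r (par_diff v_r dv) reach).
Qed.

(* The root is a fair coin between [z r] and [y r]; every other vertex is a
   deterministic function of its designated parent. *)
Definition mix2_cond (v : V) (c : C) (x : {ffun V -> C}) : R :=
  if v == r then mix2 R (z r) (y r) c else (c == forced x v)%:R.

Lemma mix2_prod_cond x : mix2 R z y x = \prod_v mix2_cond v (x v) x.
Proof.
rewrite (bigD1 r) //= /mix2_cond eqxx.
rewrite (eq_bigr (fun v => (x v == forced x v)%:R)); last by move=> v /negbTE ->.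
rewrite prod_indicator -/(consistent x).
have [cx | ncx] := boolP (consistent x); last first.
  have [xz | xz] := eqVneq x z; first by rewrite xz consistent_z in ncx.
  have [xy | xy] := eqVneq x y; first by rewrite xy consistent_y in ncx.
  by rewrite /mix2 (negbTE xz) (negbTE xy) mulr0 addr0 mul0r.
have eqr w : consistent w -> (x == w) = (x r == w r).
  by move=> cw; apply/eqP/eqP => [-> | /(consistent_eq cw cx)].
by rewrite /mix2 eqr ?consistent_z // eqr ?consistent_y // mulr1.
Qed.

Lemma mix2_factorises : factorises E (mix2 R z y).
Proof.
exists mix2_cond; split => [v c x x' eq_par | v c x | v x | x].
- rewrite /mix2_cond; case: eqP => // /eqP v_r.
  have [zy_v | dv] := eqVneq (z v) (y v); first by rewrite !forced_same.
  by rewrite /forced eq_par // inE par_edge.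
- by rewrite /mix2_cond; case: (v == r); rewrite ?mix2_ge0.
- rewrite /mix2_cond; case: (v == r); first exact: sum_mix2.
  exact: sum_indicator.
- exact: mix2_prod_cond.
Qed.

End MixtureFactorises.

Section NonadjacentSlice.
Variables (R : realType) (V C : finType) (E : rel V) (p : {ffun V -> C} -> R).
Variables (u w : V) (x : {ffun V -> C}).
Hypotheses (acyc : acyclic E) (neq_uw : u != w) (nadj_uw : ~~ adj E u w).

(* Neither endpoint is a parent of the other, so on this slice the conditionals
   of [u] and [w] do not see the coordinates being varied. *)
Lemma factorises_slice_le : factorises E p ->
  exists qu qw : C -> R,
    [/\ forall a, 0 <= qu a, \sum_a qu a = 1, forall b, 0 <= qw b, \sum_b qw b = 1 &
        forall a b, p (fupd (fupd x u a) w b) <= qu a * qw b].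
Proof.
case=> q [q_local q_ge0 q_sum q_prod].
have q_le1 v c x' : q v c x' <= 1 by rewrite -(q_sum v x'); exact: ler_term_sum.
move: nadj_uw; rewrite /adj negb_or => /andP[nEuw nEwu].
have irr := acyclic_irrefl acyc.
have slice_eq a b t : t != u -> t != w -> fupd (fupd x u a) w b t = x t.
  by move=> /negbTE tu /negbTE tw; rewrite !ffunE tu tw.
have q_slice v c a b : (v == u) || (v == w) -> q v c (fupd (fupd x u a) w b) = q v c x.
  move=> v_uw; apply: q_local => t; rewrite inE => Etv.
  by apply: slice_eq; apply: contraTneq Etv => ->; case/orP: v_uw => /eqP->; rewrite ?irr.
exists (fun a => q u a x), (fun b => q w b x); split => // a b.
have neq_wu : w != u by rewrite eq_sym.
rewrite q_prod (bigD1 u) //= (bigD1 w) //= mulrA.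
rewrite !ffunE eqxx (negbTE neq_uw) eqxx !q_slice ?eqxx ?orbT //.
rewrite ler_piMr ?mulr_ge0 //.
by apply: prodr_ile1 => v _; rewrite q_ge0 q_le1.
Qed.

End NonadjacentSlice.

Lemma product_dominated_not_coupled (R : realType) (C : finType)
    (qu qw : C -> R) (g : C -> C -> R) (c c' : C) :
  c != c' -> (forall a, 0 <= qu a) -> \sum_a qu a = 1 ->
  (forall b, 0 <= qw b) -> \sum_b qw b = 1 ->
  (forall a b, g a b <= qu a * qw b) -> ~ (1 / 2 <= g c c /\ 1 / 2 <= g c' c').
Proof.
move=> cc' qu_ge0 qu_sum qw_ge0 qw_sum g_le [g_cc g_c'c'].
have := lerD_terms_sum qu_ge0 cc'; have := lerD_terms_sum qw_ge0 cc'.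
rewrite qu_sum qw_sum => qw2 qu2; have := g_le c c; have := g_le c' c'.
have := qu_ge0 c; have := qu_ge0 c'; have := qw_ge0 c; have := qw_ge0 c'.
have : qu c * qw c <= qu c by rewrite ler_piMr //; have := qw_ge0 c'; lra.
have : qu c' * qw c' <= qu c' by rewrite ler_piMr //; have := qw_ge0 c; lra.
(* Both [qu c] and [qu c'] must be 1/2, which then forces [qw c], [qw c'] >= 1. *)
nra.
Qed.

Lemma noninjective_nonconstant (A B : finType) (f : A -> B) :
  (#|B| < #|A|)%N -> (1 < #|B|)%N -> (forall b, exists a, f a = b) ->
  exists a0 a1 a2, [/\ a0 != a1, f a0 = f a1 & f a2 != f a0].
Proof.
move=> ltBA /card_gt1P[b [b' [_ _ bb']]] surj.
have /injectivePn[a0 [a1 a01 fa01]] : ~~ injectiveb f.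
  by apply: contraTN ltBA => /injectiveP/leq_card; rewrite leqNgt.
have [b2 b2_new] : exists b2, b2 != f a0.
  by case: (eqVneq b (f a0)) => [eb | nb]; [exists b'; rewrite -eb eq_sym | exists b].
have [a2 fa2] := surj b2; by exists a0, a1, a2; rewrite fa2.
Qed.

Section Witness.
Variables (R : realType) (V A : finType) (E : rel V) (u m w : V) (a0 a1 a2 : A).

Definition base_config : {ffun V -> A} := [ffun => a0].

Definition spike_config : {ffun V -> A} :=
  fupd (fupd (fupd base_config u a2) w a2) m a1.

Hypotheses (acyc : acyclic E) (Emw : E m w) (adj_um : adj E u m).
Hypotheses (a10 : a1 != a0) (a20 : a2 != a0).

Lemma spike_diff v :
  (base_config v != spike_config v) = [|| v == u, v == m | v == w].
Proof.
rewrite !ffunE; have [_ | _] := eqVneq v m; first by rewrite eq_sym a10 orbT.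
have [_ | _] := eqVneq v w; first by rewrite eq_sym a20 !orbT.
by have [_ | _] := eqVneq v u; rewrite ?eqxx // eq_sym a20.
Qed.

Let irr := acyclic_irrefl acyc.
Let mw : m != w. Proof. by apply: contraTneq Emw => ->; rewrite irr. Qed.
Let mu : m != u. Proof. by apply: contraTneq adj_um => ->; rewrite /adj orbb irr. Qed.

Lemma im_witness : im E (mix2 R base_config spike_config).
Proof.
split; first exact: is_dist_mix2.
have [Eum | nEum] := boolP (E u m).
- apply: (@mix2_factorises _ _ _ _ _ _ u (fun v => if v == w then m else u)).
  + move=> v vu; rewrite spike_diff (negbTE vu) /= => /orP[] /eqP->; rewrite ?eqxx //.
    by rewrite (negbTE mw).
  + move=> v vu; rewrite spike_diff (negbTE vu) /= => /orP[] /eqP->; rewrite ?eqxx spike_diff.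
      by rewrite (negbTE mw) eqxx.
    by rewrite eqxx orbT.
  + move=> v; rewrite spike_diff => /or3P[] /eqP->; [exists 0%N | exists 1%N | exists 2%N] => /=.
    * by [].
    * by rewrite (negbTE mw).
    * by rewrite eqxx (negbTE mw).
- have Emu : E m u by move: adj_um; rewrite /adj (negbTE nEum).
  apply: (@mix2_factorises _ _ _ _ _ _ m (fun => m)).
  + by move=> v vm; rewrite spike_diff (negbTE vm) /= => /orP[] /eqP->.
  + by move=> v _ _; rewrite spike_diff eqxx orbT.
  + move=> v; rewrite spike_diff => /or3P[] /eqP->; [exists 1%N | exists 0%N | exists 1%N] => //.
Qed.

Lemma fmapV_spike (B : finType) (f : A -> B) : f a1 = f a0 ->
  fmapV f spike_config = fupd (fupd (fmapV f base_config) u (f a2)) w (f a2).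
Proof.
move=> fa10; rewrite !fmapV_fupd fa10 fupd_id // !ffunE.
by rewrite (negbTE mw) (negbTE mu).
Qed.

End Witness.

Unset Implicit Arguments.

Theorem mainTheorem2 (R : realType) (V : finType) (E : rel V)
  (Hacyc : acyclic E) (Hconn : dag_connected E) (HV : (3 <= #|V|)%N)
  (HW : exists W : {set V}, [/\ #|W| = 3%N, induced_connected E W,
          ~ induced_complete E W & ~ induced_vstructure E W])
  (A B : finType) (f : A -> B) (Hsurj : forall b : B, exists a : A, f a = b)
  (HAB : (#|B| < #|A|)%N) (HB1 : (1 < #|B|)%N) :
  exists p : {ffun V -> A} -> R,
    im E p /\ ~ im E (pushforward f p).
Proof.
have [u [m [w [uw Emw adj_um nadj_uw]]]] := chain_or_fork_triple Hacyc HW.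
have [a0 [a1 [a2 [a01 fa01 fa20]]]] := noninjective_nonconstant HAB HB1 Hsurj.
have a20 : a2 != a0 by apply: contraNneq fa20 => ->.
have a10 : a1 != a0 by rewrite eq_sym.
set z := base_config V a0; set y := spike_config u m w a0 a1 a2.
exists (mix2 R z y); split; first exact: im_witness.
have fz v : fmapV f z v = f a0 by rewrite !ffunE.
have fy := fmapV_spike a2 Hacyc Emw adj_um (esym fa01).
have fzy : fmapV f z != fmapV f y.
  apply: contraNneq fa20 => /(congr1 (fun x : {ffun V -> B} => x u)).
  by rewrite fy !ffunE eqxx (negbTE uw) => ->.
case=> _ /(factorises_slice_le (fmapV f z) Hacyc uw nadj_uw)[qu [qw [qu0 qu1 qw0 qw1 le_prod]]].
have fa02 : f a0 != f a2 by rewrite eq_sym.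
apply: (product_dominated_not_coupled fa02 qu0 qu1 qw0 qw1 le_prod).
rewrite (fupd_id (fz u)) (fupd_id (fz w)) -fy !pushforward_mix2 mix2_left // mix2_right //.
Qed.
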